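(* Let $\kappa\in\mathbb N_0\cup\{\infty\}$ and let $(s_j)_{j=0}^\kappa\in\mathcal H^{\ge,e}_{q,\kappa}$. Then for each $n\in\mathbb N_0$ with $2n\le\kappa$, the subspace $\mathcal D_n$ is a Dubovoj subspace corresponding to $(H_n,T_{q,n})$, i.e. $T_{q,n}^*(\mathcal D_n)\subseteq\mathcal D_n$ and $\mathcal N(H_n)\cap\mathcal D_n=\{0\}$, $\mathcal N(H_n)+\mathcal D_n=\mathbb C^{(n+1)q}$; moreover $\dim\mathcal D_n=\operatorname{rank}H_n=\sum_{j=0}^n\operatorname{rank}L_j$.
   Context: For a sequence $(s_j)$ of complex $q\times q$ matrices, $H_n:=[s_{j+k}]_{j,k=0}^n$. $\mathcal H^{\ge}_{q,2n}$ is the set of $(s_j)_{j=0}^{2n}$ with $H_n$ positive semidefinite; $\mathcal H^{\ge,e}_{q,2n}$ is the set of $(s_j)_{j=0}^{2n}$ for which there exist $s_{2n+1},s_{2n+2}$ with $(s_j)_{j=0}^{2n+2}\in\mathcal H^{\ge}_{q,2n+2}$; $\mathcal H^{\ge,e}_{q,2n+1}$ is the set of $(s_j)_{j=0}^{2n+1}$ for which there is $s_{2n+2}$ with $(s_j)_{j=0}^{2n+2}\in\mathcal H^{\ge}_{q,2n+2}$; $\mathcal H^{\ge,e}_{q,\infty}$ is the set of $(s_j)_{j=0}^\infty$ with $H_n$ positive semidefinite for all $n$. $T_{q,n}:=[\delta_{j,k+1}I_q]_{j,k=0}^n$. Schur complements: $L_0:=s_0$, $L_j:=s_{2j}-\operatorname{row}(s_i)_{i=j}^{2j-1}H_{j-1}^\dagger\operatorname{col}(s_i)_{i=j}^{2j-1}$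 ($j\ge1$), $\dagger$ the Moore–Penrose inverse. $\mathcal D_n:=\mathcal R(\operatorname{diag}(L_0,\dots,L_n))\subseteq\mathbb C^{(n+1)q}$. *)

From HB Require Import structures.
From mathcomp Require Import all_boot all_order all_algebra.
From mathcomp Require Import complex.
From mathcomp Require Import reals.
From Stdlib Require Import ClassicalEpsilon.
Set Implicit Arguments. Unset Strict Implicit. Unset Printing Implicit Defensive.
Import Order.TTheory GRing.Theory Num.Theory.
Local Open Scope ring_scope.

Section Defs.
Variable C : numClosedFieldType.

Definition ctr m n (A : 'M[C]_(m, n)) : 'M[C]_(n, m) := (map_mx Num.conj A)^T.

Definition psd n (A : 'M[C]_n) : Prop :=
  ctr A = A /\ forall x : 'cV[C]_n, 0 <= (ctr x *m A *m x) 0 0.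

Definition penrose m n (A : 'M[C]_(m, n)) (X : 'M[C]_(n, m)) : Prop :=
  [/\ A *m X *m A = A, X *m A *m X = X, ctr (A *m X) = A *m X & ctr (X *m A) = X *m A].
Definition MPinv m n (A : 'M[C]_(m, n)) : 'M[C]_(n, m) :=
  epsilon (inhabits 0) (penrose A).

(* splitting an index of 'I_(a * q) into (block index, index inside block) *)
Definition blk a q (i : 'I_(a * q)) : 'I_a * 'I_q :=
  enum_val (cast_ord (esym (mxvec_cast a q)) i).

Definition blockq q k1 k2 (F : 'I_k1 -> 'I_k2 -> 'M[C]_q) : 'M[C]_(k1 * q, k2 * q) :=
  \matrix_(i, j) F (blk i).1 (blk j).1 (blk i).2 (blk j).2.

Variable q : nat.
Implicit Types s : nat -> 'M[C]_q.

Definition Hk k s : 'M[C]_(k * q) := blockq (fun a b : 'I_k => s (a + b)%N).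
Definition Hn n s : 'M[C]_(n.+1 * q) := Hk n.+1 s.

Definition Tq n : 'M[C]_(n.+1 * q) :=
  blockq (fun a b : 'I_n.+1 => if a == b.+1 :> nat then 1%:M else 0).

Definition rowS j s : 'M[C]_(1 * q, j * q) := blockq (fun (_ : 'I_1) (b : 'I_j) => s (j + b)%N).
Definition colS j s : 'M[C]_(j * q, 1 * q) := blockq (fun (a : 'I_j) (_ : 'I_1) => s (j + a)%N).

Definition Lj s j : 'M[C]_q :=
  if j is 0 then s 0%N
  else s (2 * j)%N - castmx (mul1n q, mul1n q) (rowS j s *m MPinv (Hk j s) *m colS j s).

Definition diagL n s : 'M[C]_(n.+1 * q) :=
  blockq (fun a b : 'I_n.+1 => if a == b then Lj s a else 0).

Definition inRange m n (A : 'M[C]_(m, n)) (x : 'cV[C]_m) : Prop := exists y : 'cV[C]_n, x = A *m y.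
Definition inKer m n (A : 'M[C]_(m, n)) (x : 'cV[C]_n) : Prop := A *m x = 0.

(* kappa : option nat, None = infinity; the sequence is (s_j)_{j=0}^kappa (values beyond kappa irrelevant) *)
Definition Hext (kappa : option nat) s : Prop :=
  match kappa with
  | None => forall n, psd (Hn n s)
  | Some k => exists t : nat -> 'M[C]_q,
      (forall j, (j <= k)%N -> t j = s j) /\ psd (Hn (k./2).+1 t)
  end.

Definition le_kappa (m : nat) (kappa : option nat) : Prop :=
  match kappa with None => True | Some k => (m <= k)%N end.

End Defs.

From HB Require Import structures.
From mathcomp Require Import all_boot all_order all_algebra.
From mathcomp Require Import complex reals.
From mathcomp Require Import ring zify.
From Stdlib Require Import ClassicalEpsilon.
Set Implicit Arguments. Unset Strict Implicit. Unset Printing Implicit Defensive.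
Import Order.TTheory GRing.Theory Num.Theory.
Local Open Scope ring_scope.

(* Let y_j = col(s_j, ..., s_{2j-1}) and let w_j be the block column
   (-H_{j-1}^+ y_j, I_q, 0, ..., 0).  Positivity of H_j puts y_j in the range of
   H_{j-1}, so the first j+1 block rows of H_n w_j are (0, ..., 0, L_j).  Hence
   W = [w_0, ..., w_n] is block unit upper triangular and W^* H_n W = D, the
   block diagonal diag(L_0, ..., L_n): this gives rank H_n = rank D = sum of
   the rank L_j and makes every L_j hermitian, and a descending induction over
   the blocks shows N(H_n) /\ R(D) = 0, so that the rank equality makes
   N(H_n) + R(D) direct and full.  If moreover H_{n+1} >= 0, which
   extendability provides, then N(L_j) <= N(L_{j+1}), i.e. R(L_{j+1}) <= R(L_j);
   as T^* shifts the blocks up by one, this is the T^*-invariance of R(D). *)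

Lemma index_allpairs (T1 T2 : eqType) (s : seq T1) (t : seq T2) x y :
  uniq s -> x \in s -> y \in t ->
  index (x, y) [seq (a, b) | a <- s, b <- t] = (index x s * size t + index y t)%N.
Proof.
elim: s => //= x0 s IH /andP[nx0 us]; rewrite inE index_cat.
case: eqP => [<- _ yt|nx /= xs yt].
  rewrite mem_map ?yt; last by move=> ? ? [].
  by rewrite index_map ?eqxx // => ? ? [].
have -> : (x, y) \in [seq (x0, b) | b <- t] = false.
  by apply/negP => /mapP[b _ [e _]]; apply: nx.
rewrite IH // size_map; case: eqP => [e|_]; first by case: nx.
by rewrite mulSn addnA.
Qed.

Lemma mxvec_indexE k q (a : 'I_k) (r : 'I_q) : nat_of_ord (mxvec_index a r) = (a * q + r)%N.
Proof.
rewrite /mxvec_index /= /enum_rank enum_rank_in.unlock /= insubdK; last first.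
  by rewrite unfold_in /= cardE index_mem mem_enum.
rewrite enumT unlock /= /prod_enum index_allpairs ?enum_uniq ?mem_enum //.
by rewrite !index_enum_ord size_enum_ord.
Qed.

Lemma sum_widen_ord (V : nmodType) k m (km : (k <= m)%N) (F : 'I_m -> V) :
  (forall a : 'I_m, (k <= a)%N -> F a = 0) ->
  \sum_(a < m) F a = \sum_(a < k) F (widen_ord km a).
Proof.
move=> F0; rewrite -big_ord_narrow (bigID (fun a : 'I_m => (a < k)%N)) /=.
by rewrite [X in _ + X]big1 ?addr0 // => a; rewrite -leqNgt; apply: F0.
Qed.

Lemma downward_ind (P : nat -> Prop) n :
  (forall a, (n < a)%N -> P a) ->
  (forall j, (j <= n)%N -> (forall a, (j < a)%N -> P a) -> P j) -> forall a, P a.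
Proof.
move=> Pout Pstep; suff PD d a : (n < a + d)%N -> P a by move=> a; apply: (PD n.+1); lia.
elim: d a => [|d IH] a ha; first by apply: Pout; rewrite addn0 in ha.
case: (ltnP n a) => [/Pout //|an]; apply: Pstep => // b hb.
by apply: IH; lia.
Qed.

Lemma mxrank_castmx (F : fieldType) m1 n1 m2 n2 (e : (m1 = m2) * (n1 = n2))
    (A : 'M[F]_(m1, n1)) :
  \rank (castmx e A) = \rank A.
Proof. by case: e => e1 e2; case: m2 / e1; case: n2 / e2; rewrite castmx_id. Qed.

Section Adjoint.
Variable C : numClosedFieldType.

Lemma ctrE m n (A : 'M[C]_(m, n)) i j : ctr A i j = (A j i)^*.
Proof. by rewrite !mxE. Qed.

Lemma ctrK m n (A : 'M[C]_(m, n)) : ctr (ctr A) = A.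
Proof. by apply/matrixP=> i j; rewrite !ctrE conjCK. Qed.

Lemma ctrM m n p (A : 'M[C]_(m, n)) (B : 'M[C]_(n, p)) :
  ctr (A *m B) = ctr B *m ctr A.
Proof. by rewrite /ctr map_mxM trmx_mul. Qed.

Lemma ctrD m n (A B : 'M[C]_(m, n)) : ctr (A + B) = ctr A + ctr B.
Proof. by rewrite /ctr map_mxD linearD. Qed.

Lemma ctr0 m n : ctr (0 : 'M[C]_(m, n)) = 0.
Proof. by rewrite /ctr map_mx0 trmx0. Qed.

Lemma ctr1 n : ctr (1%:M : 'M[C]_n) = 1%:M.
Proof. by rewrite /ctr map_mx1 trmx1. Qed.

Lemma ctr_sum m n (I : Type) (r : seq I) (P : pred I) (F : I -> 'M[C]_(m, n)) :
  ctr (\sum_(i <- r | P i) F i) = \sum_(i <- r | P i) ctr (F i).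
Proof. by elim/big_rec2: _ => [|i x y _ <-]; rewrite ?ctr0 ?ctrD. Qed.

Lemma ctrV n (A : 'M[C]_n) : ctr (invmx A) = invmx (ctr A).
Proof. by rewrite /ctr map_invmx trmx_inv. Qed.

Lemma mxrank_ctr m n (A : 'M[C]_(m, n)) : \rank (ctr A) = \rank A.
Proof. by rewrite /ctr mxrank_tr mxrank_map. Qed.

Lemma map_conj_mxK m n (A : 'M[C]_(m, n)) : map_mx Num.conj (map_mx Num.conj A) = A.
Proof. by apply/matrixP=> i j; rewrite !mxE conjCK. Qed.

Lemma ctr_mul_ge0 n (x : 'cV[C]_n) : 0 <= (ctr x *m x) 0 0.
Proof. by rewrite mxE sumr_ge0 // => i _; rewrite ctrE -normCKC exprn_ge0. Qed.

Lemma ctr_mul_eq0 n (x : 'cV[C]_n) : (ctr x *m x) 0 0 = 0 -> x = 0.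
Proof.
rewrite mxE => /eqP; rewrite psumr_eq0 => [/allP x0|i _]; last first.
  by rewrite ctrE -normCKC exprn_ge0.
apply/matrixP=> i j; rewrite (ord1 j) mxE.
have := x0 i (mem_index_enum _); rewrite ctrE -normCKC /= sqrf_eq0 normr_eq0.
by move/eqP.
Qed.

Lemma full_col_rank_mulmx_eq0 k r (M : 'M[C]_(k, r)) (x : 'cV[C]_r) :
  \rank M = r -> M *m x = 0 -> x = 0.
Proof.
move=> rM Mx; have fr : row_free M^T by rewrite /row_free mxrank_tr rM.
have : x^T *m M^T = 0 *m M^T by rewrite -trmx_mul Mx trmx0 mul0mx.
by move/(row_free_inj fr)/(congr1 trmx); rewrite trmxK trmx0.
Qed.

Lemma ker0_unitmx n (M : 'M[C]_n) :
  (forall x : 'cV[C]_n, M *m x = 0 -> x = 0) -> M \in unitmx.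
Proof.
move=> M0; rewrite -unitmx_tr -row_free_unit; apply/inj_row_free => v Mv.
have := M0 v^T; rewrite -[M]trmxK -trmx_mul Mv trmx0 => /(_ erefl).
by move/(congr1 trmx); rewrite trmxK trmx0.
Qed.

Lemma unitmx_gram k r (M : 'M[C]_(k, r)) : \rank M = r -> ctr M *m M \in unitmx.
Proof.
move=> rM; apply: ker0_unitmx => x Mx; apply: (full_col_rank_mulmx_eq0 rM).
by apply: ctr_mul_eq0; rewrite ctrM -mulmxA (mulmxA (ctr M)) Mx mulmx0 mxE.
Qed.

Lemma penrose_rank_factor m r n (F : 'M[C]_(m, r)) (G : 'M[C]_(r, n)) :
  ctr F *m F \in unitmx -> G *m ctr G \in unitmx -> exists X, penrose (F *m G) X.
Proof.
move=> uF uG; pose FF := ctr F *m F; pose GG := G *m ctr G.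
exists (ctr G *m invmx GG *m invmx FF *m ctr F).
have eAX : F *m G *m (ctr G *m invmx GG *m invmx FF *m ctr F) = F *m invmx FF *m ctr F.
  by rewrite !mulmxA -(mulmxA F) -/GG mulmxK.
have eXA : ctr G *m invmx GG *m invmx FF *m ctr F *m (F *m G) = ctr G *m invmx GG *m G.
  by rewrite !mulmxA -(mulmxA _ (ctr F)) -/FF mulmxKV.
split.
- by rewrite eAX !mulmxA -(mulmxA _ (ctr F)) -/FF mulmxKV.
- by rewrite eXA !mulmxA -(mulmxA _ G) -/GG mulmxKV.
- by rewrite eAX !ctrM ctrK ctrV /FF ctrM ctrK mulmxA.
- by rewrite eXA !ctrM ctrK ctrV /GG ctrM ctrK mulmxA.
Qed.

Lemma penrose_exists m n (A : 'M[C]_(m, n)) : exists X, penrose A X.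
Proof.
have rF : \rank (col_base A) = \rank A.
  by have := col_base_full A; rewrite /row_full => /eqP.
have rG : \rank (ctr (row_base A)) = \rank A.
  by rewrite mxrank_ctr; have := row_base_free A; rewrite /row_free => /eqP.
have uG := unitmx_gram rG; rewrite ctrK in uG.
by rewrite -(mulmx_base A); apply: penrose_rank_factor (unitmx_gram rF) uG.
Qed.

Lemma MPinvP m n (A : 'M[C]_(m, n)) : penrose A (MPinv A).
Proof. by apply: epsilon_spec; apply: penrose_exists. Qed.

Lemma mulmx_col m n p (M : 'M[C]_(m, n)) (X : 'M[C]_(n, p)) j :
  M *m col j X = col j (M *m X).
Proof. by apply/matrixP=> i k; rewrite !mxE; apply: eq_bigr => l _; rewrite !mxE. Qed.

Lemma ker_sub_mulmx0 m m' n p (A : 'M[C]_(m, n)) (B : 'M[C]_(m', n)) (X : 'M[C]_(n, p)) :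
  (forall x : 'cV[C]_n, A *m x = 0 -> B *m x = 0) -> A *m X = 0 -> B *m X = 0.
Proof.
move=> AB AX; apply/matrixP=> i j.
have := AB (col j X); rewrite mulmx_col AX.
have -> : col j (0 : 'M[C]_(m, p)) = 0 by apply/matrixP=> a b; rewrite !mxE.
move=> /(_ erefl) BXj.
have -> : (B *m X) i j = col j (B *m X) i 0 by rewrite [in RHS]mxE.
by rewrite -mulmx_col BXj !mxE.
Qed.

Lemma herm_range_MPinv n p (A : 'M[C]_n) (B : 'M[C]_(n, p)) :
  ctr A = A -> (forall x : 'cV[C]_n, A *m x = 0 -> ctr B *m x = 0) ->
  A *m (MPinv A *m B) = B.
Proof.
move=> hA AB.
have ABT : forall x : 'cV[C]_n, A^T *m x = 0 -> B^T *m x = 0.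
  move=> x; rewrite -{1}hA /ctr trmxK => /(congr1 (map_mx Num.conj)).
  rewrite map_mxM map_conj_mxK map_mx0 => /AB /(congr1 (map_mx Num.conj)).
  by rewrite map_mxM map_conj_mxK map_mx0 /ctr map_trmx map_conj_mxK.
have : (B^T <= A^T)%MS.
  by rewrite submxE; apply/eqP; apply: (ker_sub_mulmx0 ABT); apply: mulmx_coker.
case/submxP => Z /(congr1 trmx); rewrite trmx_mul !trmxK => ->.
by case: (MPinvP A) => AXA _ _ _; rewrite !mulmxA AXA.
Qed.

Definition hform n (P : 'M[C]_n) (u v : 'cV[C]_n) : C := (ctr u *m P *m v) 0 0.

Lemma hformDl n (P : 'M[C]_n) u u' v : hform P (u + u') v = hform P u v + hform P u' v.
Proof. by rewrite /hform ctrD !mulmxDl mxE. Qed.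

Lemma hformDr n (P : 'M[C]_n) u v v' : hform P u (v + v') = hform P u v + hform P u v'.
Proof. by rewrite /hform mulmxDr mxE. Qed.

Lemma hformZl n (P : 'M[C]_n) c u v : hform P (c *: u) v = c^* * hform P u v.
Proof. by rewrite /hform /ctr map_mxZ /= linearZ /= -!scalemxAl mxE. Qed.

Lemma hformZr n (P : 'M[C]_n) c u v : hform P u (c *: v) = c * hform P u v.
Proof. by rewrite /hform -scalemxAr mxE. Qed.

Lemma hform_conj n (P : 'M[C]_n) u v : ctr P = P -> hform P u v = (hform P v u)^*.
Proof. by move=> hP; rewrite /hform -[in RHS]ctrE !ctrM ctrK hP mulmxA. Qed.

Lemma psd_hform_ker n (P : 'M[C]_n) x : psd P -> hform P x x = 0 -> P *m x = 0.
Proof.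
case=> hP pP hx; pose y := P *m x; pose a := hform P x y; pose b := hform P y y.
have ea : a = (ctr y *m y) 0 0 by rewrite /a /hform /y ctrM hP mulmxA.
have a0 : 0 <= a by rewrite ea ctr_mul_ge0.
have b0 : 0 <= b by apply: pP.
have b1 : 0 <= b + 1 by rewrite addr_ge0.
have eya : hform P y x = a by rewrite hform_conj // -/a geC0_conj.
(* positivity on (b + 1) x - a y gives - a^2 (b + 2) >= 0 *)
have := pP ((b + 1) *: x - a *: y); rewrite -/(hform P _ _).
rewrite !(hformDl, hformDr, hformZl, hformZr) -!scaleN1r !(hformZl, hformZr).
rewrite hx eya -/a -/b rmorphN1 (geC0_conj a0) (geC0_conj b1).
have -> : (b + 1) * ((b + 1) * 0 + -1 * (a * a)) +
  ((b + 1) * (-1 * (a * a)) + -1 * (a * (-1 * (a * b)))) = - (a * a * (b + 2)).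
  by ring.
rewrite oppr_ge0 => le_a2b_0.
have : a * a * (b + 2) = 0.
  by apply/eqP; rewrite eq_le le_a2b_0 /= !mulr_ge0 // addr_ge0.
move/eqP; rewrite !mulf_eq0 orbb (gt_eqF (ltr_wpDl b0 _)) // orbF => /eqP a00.
by apply: ctr_mul_eq0; rewrite -ea.
Qed.

End Adjoint.

Section Blocks.
Variables (C : numClosedFieldType) (q : nat).

Lemma blk_mxvec_index k (a : 'I_k) (r : 'I_q) : blk (mxvec_index a r) = (a, r).
Proof. by rewrite /blk /mxvec_index cast_ordK enum_rankK. Qed.

Lemma mxvec_index_blk k (i : 'I_(k * q)) : mxvec_index (blk i).1 (blk i).2 = i.
Proof. by case/mxvec_indexP: i => a r; rewrite blk_mxvec_index. Qed.

Lemma blk_divn_modn k (i : 'I_(k * q)) :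
  nat_of_ord (blk i).1 = (i %/ q)%N /\ nat_of_ord (blk i).2 = (i %% q)%N.
Proof.
have q0 : (0 < q)%N by case: (blk i).2 => r; apply: leq_ltn_trans.
have -> : nat_of_ord i = ((blk i).1 * q + (blk i).2)%N.
  by rewrite -{1}(mxvec_index_blk i) mxvec_indexE.
by rewrite divnMDl // divn_small ?addn0 // modnMDl modn_small.
Qed.

Definition rblock k p (M : 'M[C]_(k * q, p)) (a : nat) : 'M[C]_(q, p) :=
  if insub a is Some a' then \matrix_(r, c) M (mxvec_index a' r) c else 0.

Definition stack k p (f : nat -> 'M[C]_(q, p)) : 'M[C]_(k * q, p) :=
  \matrix_(i, c) f (blk i).1 (blk i).2 c.

Lemma rblock_ord k p (M : 'M[C]_(k * q, p)) (a : 'I_k) :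
  rblock M a = \matrix_(r, c) M (mxvec_index a r) c.
Proof. by rewrite /rblock valK. Qed.

Lemma rblock_out k p (M : 'M[C]_(k * q, p)) a : (k <= a)%N -> rblock M a = 0.
Proof. by move=> ka; rewrite /rblock insubF // ltnNge ka. Qed.

Lemma rblock_stack k p (f : nat -> 'M[C]_(q, p)) a : (a < k)%N -> rblock (stack k f) a = f a.
Proof.
move=> ak; rewrite -[a]/(val (Ordinal ak)) rblock_ord.
by apply/matrixP=> r c; rewrite !mxE blk_mxvec_index.
Qed.

Lemma rblock_inj k p (M N : 'M[C]_(k * q, p)) :
  (forall a, (a < k)%N -> rblock M a = rblock N a) -> M = N.
Proof.
move=> MN; apply/matrixP=> i c; rewrite -(mxvec_index_blk i).
have := MN _ (ltn_ord (blk i).1); rewrite !rblock_ord => /matrixP/(_ (blk i).2 c).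
by rewrite !mxE.
Qed.

Lemma rblock0 k p a : rblock (0 : 'M[C]_(k * q, p)) a = 0.
Proof.
case: (ltnP a k) => ak; last by rewrite rblock_out.
by rewrite -[a]/(val (Ordinal ak)) rblock_ord; apply/matrixP => r c; rewrite !mxE.
Qed.

Lemma rblockMr k p p' (M : 'M[C]_(k * q, p)) (Z : 'M[C]_(p, p')) a :
  rblock (M *m Z) a = rblock M a *m Z.
Proof.
case: (ltnP a k) => ak; last by rewrite !rblock_out // mul0mx.
rewrite -[a]/(val (Ordinal ak)) !rblock_ord; apply/matrixP => r c; rewrite !mxE.
by apply: eq_bigr => l _; rewrite !mxE.
Qed.

Lemma sum_mulq k (F : 'I_(k * q) -> C) :
  \sum_i F i = \sum_(a < k) \sum_(r < q) F (mxvec_index a r).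
Proof.
rewrite pair_big /= (reindex (uncurry (@mxvec_index k q))) /=; last first.
  by case: (curry_mxvec_bij k q) => g h1 h2; exists g => x _; [apply: h1|apply: h2].
by apply: eq_bigr => -[a r].
Qed.

Lemma rblock_blockq_mul k1 k2 p (F : 'I_k1 -> 'I_k2 -> 'M[C]_q) (X : 'M[C]_(k2 * q, p))
    (a : 'I_k1) :
  rblock (blockq F *m X) a = \sum_(b < k2) F a b *m rblock X b.
Proof.
rewrite rblock_ord; apply/matrixP => r c; rewrite !mxE summxE sum_mulq.
apply: eq_bigr => b _; rewrite !mxE rblock_ord; apply: eq_bigr => r' _.
by rewrite !mxE !blk_mxvec_index.
Qed.

Lemma ctr_mul_rblock k p1 p2 (X : 'M[C]_(k * q, p1)) (Y : 'M[C]_(k * q, p2)) :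
  ctr X *m Y = \sum_(a < k) ctr (rblock X a) *m rblock Y a.
Proof.
apply/matrixP => i j; rewrite !mxE summxE sum_mulq.
apply: eq_bigr => a _; rewrite !mxE !rblock_ord; apply: eq_bigr => r _.
by rewrite !mxE.
Qed.

Lemma ctr_blockq k1 k2 (F : 'I_k1 -> 'I_k2 -> 'M[C]_q) :
  ctr (blockq F) = blockq (fun a b => ctr (F b a)).
Proof. by apply/matrixP => i j; rewrite !mxE. Qed.

Lemma blockq_mul k1 k2 k3 (F : 'I_k1 -> 'I_k2 -> 'M[C]_q) (G : 'I_k2 -> 'I_k3 -> 'M[C]_q) :
  blockq F *m blockq G = blockq (fun a b => \sum_(c < k2) F a c *m G c b).
Proof.
apply/matrixP => i j; rewrite !mxE summxE sum_mulq.
apply: eq_bigr => c _; rewrite !mxE; apply: eq_bigr => r _.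
by rewrite !mxE !blk_mxvec_index.
Qed.

Lemma eq_blockq k1 k2 (F G : 'I_k1 -> 'I_k2 -> 'M[C]_q) :
  (forall a b, F a b = G a b) -> blockq F = blockq G.
Proof. by move=> FG; apply/matrixP => i j; rewrite !mxE FG. Qed.

Definition blkdiag k (G : nat -> 'M[C]_q) : 'M[C]_(k * q) :=
  blockq (fun a b : 'I_k => if a == b then G (nat_of_ord a) else 0).

Lemma blkdiagE k G (x y : 'I_(k * q)) : blkdiag k G x y =
  if (x %/ q == y %/ q)%N then G (x %/ q)%N (blk x).2 (blk y).2 else 0.
Proof.
rewrite mxE -val_eqE /=; have [-> _] := blk_divn_modn x; have [-> _] := blk_divn_modn y.
by case: ifP => _; rewrite ?mxE.
Qed.

Lemma blk2_eq k k' (x : 'I_(k * q)) (y : 'I_(k' * q)) :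
  nat_of_ord x = y -> (blk x).2 = (blk y).2.
Proof.
move=> e; apply: val_inj => /=.
by have [_ ->] := blk_divn_modn x; have [_ ->] := blk_divn_modn y; rewrite e.
Qed.

Lemma blk2_shift k k' (x : 'I_(k * q)) (r : 'I_q) :
  nat_of_ord x = (k' * q + r)%N -> (blk x).2 = r.
Proof.
move=> ex; apply: val_inj => /=; have [_ ->] := blk_divn_modn x.
by rewrite ex modnMDl modn_small.
Qed.

Lemma blkdiag_recr k G : castmx (mulSnr k q, mulSnr k q) (blkdiag k.+1 G) =
  block_mx (blkdiag k G) 0 0 (G k).
Proof.
apply/matrixP => x y; rewrite castmxE -[x]splitK -[y]splitK.
case: (split x) => i; case: (split y) => j /=;
  rewrite ?block_mxEul ?block_mxEur ?block_mxEdl ?block_mxEdr !blkdiagE ?mxE /=.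
- by rewrite (blk2_eq (x := cast_ord _ _) (y := i)) // (blk2_eq (x := cast_ord _ _) (y := j)).
- have q0 : (0 < q)%N by case: j => r; apply: leq_ltn_trans.
  rewrite (divnMDl _ _ q0) (divn_small (ltn_ord j)) addn0.
  by rewrite ifN // ltn_eqF // ltn_divLR.
- have q0 : (0 < q)%N by case: i => r; apply: leq_ltn_trans.
  rewrite (divnMDl _ _ q0) (divn_small (ltn_ord i)) addn0.
  by rewrite ifN // gtn_eqF // ltn_divLR.
- have q0 : (0 < q)%N by case: i => r; apply: leq_ltn_trans.
  rewrite !(divnMDl _ _ q0) (divn_small (ltn_ord i)) (divn_small (ltn_ord j)) addn0 eqxx.
  by rewrite (blk2_shift (k' := k) (r := i)) ?(blk2_shift (k' := k) (r := j)).
Qed.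

Lemma rank_blkdiag k G : \rank (blkdiag k G) = (\sum_(a < k) \rank (G a))%N.
Proof.
elim: k => [|k IH]; first by rewrite big_ord0; apply/eqP; rewrite -leqn0 rank_leq_row.
rewrite -(mxrank_castmx (mulSnr k q, mulSnr k q)) blkdiag_recr rank_diag_block_mx.
by rewrite IH big_ord_recr.
Qed.

End Blocks.

Section Hankel.
Variables (C : numClosedFieldType) (q : nat).
Implicit Types s : nat -> 'M[C]_q.

Lemma rblock_Hk_mul s k p (X : 'M[C]_(k * q, p)) a : (a < k)%N ->
  rblock (Hk k s *m X) a = \sum_(b < k) s (a + b)%N *m rblock X b.
Proof. by move=> ak; rewrite -[a]/(val (Ordinal ak)) rblock_blockq_mul. Qed.

Lemma hform_Hk s k (x y : 'cV[C]_(k * q)) : hform (Hk k s) x y =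
  (\sum_(a < k) ctr (rblock x a) *m \sum_(b < k) s (a + b)%N *m rblock y b) 0 0.
Proof.
rewrite /hform -mulmxA ctr_mul_rblock; apply: (congr1 (fun M : 'M[C]_1 => M 0 0)).
apply: eq_bigr => a _.
by rewrite rblock_Hk_mul.
Qed.

Lemma psd_Hk_herm s k a b : psd (Hk k s) -> (a < k)%N -> (b < k)%N ->
  ctr (s (a + b)%N) = s (a + b)%N.
Proof.
case=> /matrixP hH _ ak bk; apply/matrixP => r c.
have := hH (mxvec_index (Ordinal bk) r) (mxvec_index (Ordinal ak) c).
by rewrite /Hk ctr_blockq !mxE !blk_mxvec_index /= addnC.
Qed.

Lemma rblock_pad k m p (x : 'M[C]_(k * q, p)) a : (k <= m)%N ->
  rblock (stack m (rblock x)) a = rblock x a.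
Proof.
move=> km; case: (ltnP a m) => am; first by rewrite rblock_stack.
by rewrite !rblock_out // (leq_trans km).
Qed.

Lemma hform_Hk_pad s k m (x : 'cV[C]_(k * q)) : (k <= m)%N ->
  hform (Hk m s) (stack m (rblock x)) (stack m (rblock x)) = hform (Hk k s) x x.
Proof.
move=> km; rewrite !hform_Hk; apply: (congr1 (fun M : 'M[C]_1 => M 0 0)).
rewrite (sum_widen_ord km) => [|a ka]; last by rewrite rblock_pad // rblock_out // ctr0 mul0mx.
apply: eq_bigr => a _ /=; rewrite rblock_pad //; congr (_ *m _).
rewrite (sum_widen_ord km) => [|b kb]; last by rewrite rblock_pad // rblock_out // mulmx0.
by apply: eq_bigr => b _; rewrite rblock_pad.
Qed.

Lemma psd_Hk_le s k m : (k <= m)%N -> psd (Hk m s) -> psd (Hk k s).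
Proof.
move=> km hP; split.
  rewrite /Hk ctr_blockq; apply: eq_blockq => a b /=.
  by rewrite addnC (psd_Hk_herm hP) // (leq_trans _ km).
by move=> x; rewrite -/(hform _ x x) -(hform_Hk_pad s x km); case: hP => _; apply.
Qed.

Lemma ker_Hk_colS s k (x : 'cV[C]_(k * q)) : psd (Hk k.+1 s) ->
  Hk k s *m x = 0 -> ctr (colS k s) *m x = 0.
Proof.
move=> hP Hx.
have HX : Hk k.+1 s *m stack k.+1 (rblock x) = 0.
  by apply: psd_hform_ker hP _; rewrite hform_Hk_pad // /hform -mulmxA Hx mulmx0 mxE.
have := congr1 (fun M => rblock M k) HX; rewrite rblock0 rblock_Hk_mul // big_ord_recr /=.
rewrite rblock_pad // rblock_out // mulmx0 addr0 => S0.
apply: rblock_inj => a; rewrite ltnS leqn0 => /eqP ->.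
rewrite rblock0 -S0 -[0%N]/(val (ord0 : 'I_1)) /colS ctr_blockq rblock_blockq_mul.
by apply: eq_bigr => b _; rewrite (psd_Hk_herm hP (ltnSn k) (ltnW (ltn_ord b))) rblock_pad.
Qed.

(* The identity matrix, read through the identification of 'I_(1 * q) with 'I_q. *)
Definition id1q : 'M[C]_(1 * q, q) := \matrix_(i, c) (i == mxvec_index (ord0 : 'I_1) c)%:R.

Lemma mulmx_id1q p (M : 'M[C]_(p, 1 * q)) r c : (M *m id1q) r c = M r (mxvec_index ord0 c).
Proof.
rewrite mxE (bigD1 (mxvec_index ord0 c)) //= mxE eqxx mulr1 big1 ?addr0 // => i ni.
by rewrite mxE (negbTE ni) mulr0.
Qed.

Lemma castmx1E (M : 'M[C]_(1 * q, 1 * q)) :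
  castmx (mul1n q, mul1n q) M = rblock (M *m id1q) 0.
Proof.
rewrite -[0%N]/(val (ord0 : 'I_1)) rblock_ord; apply/matrixP => r c.
rewrite castmxE [in RHS]mxE mulmx_id1q.
by congr (M _ _); apply: val_inj; exact: esym (mxvec_indexE ord0 _).
Qed.

Lemma rblock_blockq_id1q k (F : 'I_k -> 'I_1 -> 'M[C]_q) (a : 'I_k) :
  rblock (blockq F) a *m id1q = F a ord0.
Proof. by apply/matrixP => r c; rewrite mulmx_id1q rblock_ord !mxE !blk_mxvec_index. Qed.

(* The j-th block column of the congruence that diagonalises H_n:
   w_j = (- H_{j-1}^+ col(s_j, ..., s_{2j-1}), I_q, 0, ..., 0). *)
Definition schur_vec s j b : 'M[C]_q :=
  if (b < j)%N then - (rblock (MPinv (Hk j s) *m colS j s) b *m id1q)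
  else if b == j then 1%:M else 0.

Lemma schur_vec_diag s j : schur_vec s j j = 1%:M.
Proof. by rewrite /schur_vec ltnn eqxx. Qed.

Lemma schur_vec_out s j a : (j < a)%N -> schur_vec s j a = 0.
Proof. by move=> ja; rewrite /schur_vec ltnNge (ltnW ja) /= gtn_eqF. Qed.

Lemma hankel_schur_vec s j a : psd (Hk j.+1 s) -> (a <= j)%N ->
  \sum_(b < j.+1) s (a + b)%N *m schur_vec s j b = if a == j then Lj s j else 0.
Proof.
case: j => [|j] hP aj.
  by move: aj; rewrite leqn0 => /eqP ->; rewrite big_ord1 /= schur_vec_diag mulmx1.
rewrite big_ord_recr /= schur_vec_diag mulmx1.
set Y := MPinv (Hk j.+1 s) *m colS j.+1 s.
have -> : \sum_(b < j.+1) s (a + b)%N *m schur_vec s j.+1 b =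
    - ((\sum_(b < j.+1) s (a + b)%N *m rblock Y b) *m id1q).
  by rewrite mulmx_suml -sumrN; apply: eq_bigr => b _; rewrite /schur_vec ltn_ord mulmxN mulmxA.
case: eqP => [->|/eqP ne].
  rewrite /Lj -mulmxA -/Y castmx1E rblockMr /rowS -[0%N]/(val (ord0 : 'I_1)).
  by rewrite rblock_blockq_mul /= addrC; congr (s _ - _); lia.
have HY : Hk j.+1 s *m Y = colS j.+1 s.
  apply: herm_range_MPinv; first by case: (psd_Hk_le (leqnSn _) hP).
  by move=> x; apply: ker_Hk_colS.
have aj' : (a < j.+1)%N by rewrite ltn_neqAle ne.
by rewrite -rblock_Hk_mul // HY /colS -[a]/(val (Ordinal aj')) rblock_blockq_id1q addnC addNr.
Qed.

Lemma sum_mul_schur_vec s j m p (F : nat -> 'M[C]_q) (v : 'M[C]_(q, p)) : (j < m)%N ->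
  \sum_(b < m) F b *m (schur_vec s j b *m v) = (\sum_(b < j.+1) F b *m schur_vec s j b) *m v.
Proof.
move=> jm; rewrite (sum_widen_ord jm) => [|b jb]; last by rewrite schur_vec_out ?mul0mx ?mulmx0.
by rewrite mulmx_suml; apply: eq_bigr => b _; rewrite mulmxA.
Qed.

Lemma sum_ctr_hankel s k p (w : nat -> 'M[C]_q) (g : nat -> 'M[C]_(q, p)) : psd (Hk k s) ->
  \sum_(a < k) ctr (w a) *m (\sum_(b < k) s (a + b)%N *m g b) =
  \sum_(b < k) ctr (\sum_(a < k) s (b + a)%N *m w a) *m g b.
Proof.
move=> hP; under eq_bigr => a _ do rewrite mulmx_sumr.
rewrite exchange_big /=; apply: eq_bigr => b _.
rewrite ctr_sum mulmx_suml; apply: eq_bigr => a _.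
by rewrite ctrM [(b + a)%N]addnC (psd_Hk_herm hP) // mulmxA.
Qed.

Lemma sum_ord_max (V : nmodType) k (F : 'I_k.+1 -> V) :
  (forall a : 'I_k.+1, (a < k)%N -> F a = 0) -> \sum_(a < k.+1) F a = F ord_max.
Proof.
by move=> F0; rewrite big_ord_recr /= big1 ?add0r // => a _; apply: F0; exact: ltn_ord a.
Qed.

Lemma schur_form s j p (g : nat -> 'M[C]_(q, p)) : psd (Hk j.+1 s) ->
  \sum_(a < j.+1) ctr (schur_vec s j a) *m (\sum_(b < j.+1) s (a + b)%N *m g b) =
  ctr (Lj s j) *m g j.
Proof.
move=> hP; rewrite sum_ctr_hankel // sum_ord_max => [|b bj].
  by rewrite hankel_schur_vec ?eqxx.
by rewrite hankel_schur_vec 1?ltnW // ltn_eqF // ctr0 mul0mx.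
Qed.

Lemma Lj_herm s j : psd (Hk j.+1 s) -> ctr (Lj s j) = Lj s j.
Proof.
move=> hP; have := schur_form (schur_vec s j) hP; rewrite schur_vec_diag mulmx1 => <-.
rewrite sum_ord_max => [|a aj].
  by rewrite hankel_schur_vec ?eqxx // schur_vec_diag ctr1 mul1mx.
by rewrite hankel_schur_vec 1?ltnW // ltn_eqF // mulmx0.
Qed.

End Hankel.

Section Structure.
Variables (C : numClosedFieldType) (q : nat).
Implicit Types s : nat -> 'M[C]_q.

Lemma rblock_diagL s n p (y : 'M[C]_(n.+1 * q, p)) a : (a <= n)%N ->
  rblock (diagL n s *m y) a = Lj s a *m rblock y a.
Proof.
rewrite -ltnS => an; rewrite -[a]/(val (Ordinal an)) rblock_blockq_mul.
rewrite (bigD1 (Ordinal an)) //= eqxx big1 ?addr0 // => b nb.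
by rewrite eq_sym (negbTE nb) mul0mx.
Qed.

Lemma rblock_Tq n p (X : 'M[C]_(n.+1 * q, p)) a : (a <= n)%N ->
  rblock (ctr (Tq C q n) *m X) a = rblock X a.+1.
Proof.
rewrite -ltnS => an; rewrite /Tq ctr_blockq -[a]/(val (Ordinal an)) rblock_blockq_mul /=.
have [a1n|na1] := ltnP a.+1 n.+1; last first.
  rewrite rblock_out // big1 // => b _; rewrite ifN ?ctr0 ?mul0mx //.
  by rewrite neq_ltn (leq_trans (ltn_ord b) na1).
rewrite (bigD1 (Ordinal a1n)) //= eqxx ctr1 mul1mx big1 ?addr0 // => b nb.
by rewrite ifN ?ctr0 ?mul0mx //; apply: contra nb => /eqP e; apply/eqP/val_inj.
Qed.

(* Descending induction on the blocks of x: once x_b = 0 for b > j, the rows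
   a <= j of H x = 0 give L_j^* x_j = 0, and x_j = L_j y_j then forces x_j = 0. *)
Lemma ker_Hk_range_diagL s n (x y : 'cV[C]_(n.+1 * q)) : psd (Hk n.+1 s) ->
  Hk n.+1 s *m x = 0 -> x = diagL n s *m y -> x = 0.
Proof.
move=> hP Hx xD; apply: rblock_inj => a _; rewrite rblock0; move: a.
apply: (downward_ind (n := n)) => [a na|j jn xj0]; first by rewrite rblock_out.
have hPj : psd (Hk j.+1 s) by apply: psd_Hk_le hP.
have Lx : Lj s j *m rblock x j = 0.
  rewrite -(Lj_herm hPj) -(schur_form (rblock x) hPj); apply: big1 => a _.
  have := congr1 (fun M => rblock M a) Hx.
  rewrite rblock0 rblock_Hk_mul; last by have := ltn_ord a; lia.
  rewrite (sum_widen_ord (jn : (j.+1 <= n.+1)%N)) => [/= ->|b jb]; first by rewrite mulmx0.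
  by rewrite xj0 ?mulmx0.
have xjE : rblock x j = Lj s j *m rblock y j by rewrite xD rblock_diagL.
rewrite xjE in Lx *; apply: ctr_mul_eq0.
by rewrite ctrM (Lj_herm hPj) -mulmxA Lx mulmx0 mxE.
Qed.

(* U = (w_j v, 0, 0) has U^* H_{j+2} U = 0 because L_j v = 0, so H_{j+2} U = 0;
   block rows 1, ..., j+2 of this are the inner sums of schur_form at j+1 for the
   shifted vector (0, w_j v), whose right-hand side is L_{j+1} v. *)
Lemma ker_Lj_succ s j (v : 'cV[C]_q) : psd (Hk j.+3 s) ->
  Lj s j *m v = 0 -> Lj s j.+1 *m v = 0.
Proof.
move=> hP Lv.
have hP1 : psd (Hk j.+1 s) by apply: psd_Hk_le hP; lia.
have hP2 : psd (Hk j.+2 s) by apply: psd_Hk_le hP; lia.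
have j3 : (j < j.+3)%N by lia.
pose U := stack j.+3 (fun b => schur_vec s j b *m v).
have HU : Hk j.+3 s *m U = 0.
  apply: psd_hform_ker hP _; rewrite hform_Hk big1 ?mxE // => a _.
  rewrite rblock_stack // (eq_bigr (fun b : 'I_j.+3 => s (a + b)%N *m (schur_vec s j b *m v))).
    rewrite (sum_mul_schur_vec s (fun b => s (a + b)%N)) //; case: (leqP a j) => [aj|ja].
      by rewrite hankel_schur_vec //; case: eqP => _; rewrite ?Lv ?mul0mx mulmx0.
    by rewrite schur_vec_out // mul0mx ctr0 mul0mx.
  by move=> b _; rewrite rblock_stack.
have HU_row r : (r < j.+3)%N -> (\sum_(b < j.+1) s (r + b)%N *m schur_vec s j b) *m v = 0.
  move=> rj; rewrite -(sum_mul_schur_vec s (fun b => s (r + b)%N) v j3).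
  have := congr1 (fun M => rblock M r) HU; rewrite rblock0 rblock_Hk_mul // => HUr.
  by rewrite -[X in _ = X]HUr; apply: eq_bigr => b _; rewrite rblock_stack.
pose u b := if b is b'.+1 then schur_vec s j b' *m v else 0.
have uj : u j.+1 = v by rewrite /u schur_vec_diag mul1mx.
have := schur_form u hP2; rewrite (Lj_herm hP2) uj => <-.
apply: big1 => a _; rewrite big_ord_recl mulmx0 add0r.
suff -> : \sum_(b < j.+1) s (a + lift ord0 b)%N *m u (lift ord0 b) = 0 by rewrite mulmx0.
rewrite -[X in _ = X](HU_row a.+1 (ltn_ord a)) mulmx_suml; apply: eq_bigr => b _.
by rewrite /= mulmxA; congr (s _ *m _ *m _); rewrite /bump /=; lia.
Qed.

Lemma Lj_succ_range s j : psd (Hk j.+3 s) ->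
  Lj s j *m (MPinv (Lj s j) *m Lj s j.+1) = Lj s j.+1.
Proof.
move=> hP; apply: herm_range_MPinv; first by apply: Lj_herm; apply: psd_Hk_le hP; lia.
move=> v Lv; rewrite Lj_herm ?(ker_Lj_succ hP Lv) //.
by apply: psd_Hk_le hP; lia.
Qed.

Lemma diagL_Tq_stable s n (x : 'cV[C]_(n.+1 * q)) : psd (Hk n.+2 s) ->
  inRange (diagL n s) x -> inRange (diagL n s) (ctr (Tq C q n) *m x).
Proof.
move=> hP [y ->]; exists (stack n.+1 (fun a => MPinv (Lj s a) *m Lj s a.+1 *m rblock y a.+1)).
apply: rblock_inj => a; rewrite ltnS => an.
rewrite rblock_Tq // [in RHS]rblock_diagL // rblock_stack ?ltnS //.
have [a_lt_n|] := ltnP a n.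
  rewrite rblock_diagL // mulmxA Lj_succ_range //; apply: psd_Hk_le hP; lia.
by rewrite leq_eqVlt ltnNge an orbF => /eqP <-; rewrite !rblock_out ?mulmx0.
Qed.

Definition schur_mx s n : 'M[C]_(n.+1 * q) := blockq (fun a b : 'I_n.+1 => schur_vec s b a).

Lemma schur_mx_unit s n : schur_mx s n \in unitmx.
Proof.
apply: ker0_unitmx => x Wx; apply: rblock_inj => a _; rewrite rblock0; move: a.
apply: (downward_ind (n := n)) => [a na|j jn xj0]; first by rewrite rblock_out.
rewrite -ltnS in jn; have := congr1 (fun M => rblock M j) Wx.
rewrite rblock0 -[j]/(val (Ordinal jn)) rblock_blockq_mul /= => <-.
rewrite (bigD1 (Ordinal jn)) //= schur_vec_diag mul1mx big1 ?addr0 // => b nb.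
case: (ltngtP b j) => [bj|jb|bj]; first by rewrite schur_vec_out // mul0mx.
  by rewrite xj0 // mulmx0.
by case/eqP: nb; apply: val_inj.
Qed.

Lemma schur_block s n (a b : 'I_n.+1) : psd (Hk n.+1 s) ->
  \sum_(c < n.+1) ctr (schur_vec s a c) *m (\sum_(d < n.+1) s (c + d)%N *m schur_vec s b d) =
  (if a == b then Lj s a else 0).
Proof.
move=> hP; have [ba|ab] := leqP b a.
  have hPa : psd (Hk a.+1 s) by apply: psd_Hk_le hP.
  rewrite (sum_widen_ord (ltn_ord a)) => [|c ac]; last by rewrite schur_vec_out // ctr0 mul0mx.
  rewrite (eq_bigr (fun c : 'I_a.+1 =>
      ctr (schur_vec s a c) *m \sum_(d < a.+1) s (c + d)%N *m schur_vec s b d)) => [|c _].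
    rewrite schur_form // (Lj_herm hPa); case: (ltngtP b a) ba => [/= ba _|//|ba _].
      by rewrite schur_vec_out ?mulmx0 // ifN //; apply/eqP => ab; rewrite ab ltnn in ba.
    by rewrite -(val_inj ba) eqxx schur_vec_diag mulmx1.
  rewrite /= (sum_widen_ord (ltn_ord a)) // => d ad.
  by rewrite schur_vec_out ?mulmx0 // (leq_ltn_trans ba).
rewrite ifN; last by apply/eqP => ab'; rewrite ab' ltnn in ab.
have hPb : psd (Hk b.+1 s) by apply: psd_Hk_le hP.
apply: big1 => c _; case: (leqP c a) => [ca|ac]; last by rewrite schur_vec_out // ctr0 mul0mx.
rewrite (sum_widen_ord (ltn_ord b)) => [|d bd]; last by rewrite schur_vec_out ?mulmx0.
rewrite /= hankel_schur_vec ?(leq_trans ca (ltnW ab)) // ifN ?mulmx0 //.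
by rewrite neq_ltn (leq_ltn_trans ca ab).
Qed.

Lemma schur_mx_congr s n : psd (Hk n.+1 s) ->
  ctr (schur_mx s n) *m (Hk n.+1 s *m schur_mx s n) = diagL n s.
Proof.
move=> hP; rewrite /schur_mx ctr_blockq /Hk !blockq_mul.
by apply: eq_blockq => a b; rewrite schur_block.
Qed.

Lemma rank_diagL_Hk s n : psd (Hk n.+1 s) -> \rank (diagL n s) = \rank (Hk n.+1 s).
Proof.
move=> hP; have fW : row_free (schur_mx s n) by rewrite row_free_unit schur_mx_unit.
rewrite -(schur_mx_congr hP) -[ctr _ *m _]ctrK ctrM ctrK mxrank_ctr mxrankMfree //.
by rewrite mxrank_ctr mxrankMfree.
Qed.

End Structure.

Lemma ker_range_direct_sum (C : numClosedFieldType) N (H D : 'M[C]_N) :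
  (forall x, inKer H x -> inRange D x -> x = 0) -> \rank D = \rank H ->
  forall x, exists u v, [/\ inKer H u, inRange D v & x = u + v].
Proof.
move=> HD0 rDH x; pose K := kermx H^T.
have KD0 : (K :&: D^T)%MS = 0.
  apply/eqP/rowV0P => v; rewrite sub_capmx => /andP[/sub_kermxP vK /submxP[z ez]].
  suff vT0 : v^T = 0 by rewrite -[v]trmxK vT0 trmx0.
  apply: HD0; first by rewrite /inKer -[H]trmxK -trmx_mul vK trmx0.
  by exists z^T; rewrite ez trmx_mul trmxK.
have full : row_full (K + D^T)%MS.
  have := mxrank_sum_cap K D^T; rewrite KD0 mxrank0 addn0 mxrank_ker !mxrank_tr rDH.
  by rewrite /row_full => ->; rewrite subnK // rank_leq_row.
have /sub_addsmxP[u ex] := submx_full x^T full.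
exists (u.1 *m K)^T, (u.2 *m D^T)^T; split.
- by rewrite /inKer -[H]trmxK -trmx_mul -mulmxA mulmx_ker mulmx0 trmx0.
- by exists u.2^T; rewrite trmx_mul trmxK.
- by rewrite -linearD /= -ex trmxK.
Qed.

Lemma diagL_dubovoj (C : numClosedFieldType) q n (s : nat -> 'M[C]_q) : psd (Hn n.+1 s) ->
  let D := diagL n s in
  let H := Hn n s in
  [/\ (forall x, inRange D x -> inRange D (ctr (@Tq _ q n) *m x)),
      (forall x, inKer H x -> inRange D x -> x = 0),
      (forall x, exists u v, [/\ inKer H u, inRange D v & x = u + v]),
      \rank D = \rank H
    & \rank H = (\sum_(j < n.+1) \rank (Lj s j))%N].
Proof.
move=> hP D H; have hPn : psd H := psd_Hk_le (leqnSn _) hP.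
have HD0 x : inKer H x -> inRange D x -> x = 0.
  by move=> Hx [y xD]; apply: ker_Hk_range_diagL hPn Hx xD.
have rDH : \rank D = \rank H := rank_diagL_Hk hPn.
split=> //; first by move=> x; apply: diagL_Tq_stable.
  exact: ker_range_direct_sum.
by rewrite -rDH rank_blkdiag.
Qed.

Lemma Lj_ext (C : numClosedFieldType) q (s t : nat -> 'M[C]_q) j :
  (forall m, (m <= 2 * j)%N -> s m = t m) -> Lj s j = Lj t j.
Proof.
case: j => [|j] st; rewrite /Lj; first by rewrite st.
have -> : Hk j.+1 s = Hk j.+1 t.
  by apply: eq_blockq => a b; apply: st; have := ltn_ord a; have := ltn_ord b; lia.
have -> : rowS j.+1 s = rowS j.+1 t.
  by apply: eq_blockq => a b; apply: st; have := ltn_ord b; lia.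
have -> : colS j.+1 s = colS j.+1 t.
  by apply: eq_blockq => a b; apply: st; have := ltn_ord a; lia.
by rewrite st.
Qed.

Lemma Hext_psd_succ (C : numClosedFieldType) q kappa (s : nat -> 'M[C]_q) n :
  Hext kappa s -> le_kappa (2 * n) kappa ->
  exists2 t : nat -> 'M[C]_q, (forall m, (m <= 2 * n)%N -> s m = t m) & psd (Hn n.+1 t).
Proof.
case: kappa => [k|] /= hs hn; last by exists s => //; apply: hs.
case: hs => t [ts hP]; exists t => [m mn|]; first by rewrite ts // (leq_trans mn).
apply: psd_Hk_le hP; rewrite !ltnS.
by have := half_leq hn; rewrite mul2n doubleK.
Qed.

Theorem proposition8p4 (R : realType) (q : nat) (kappa : option nat)
    (s : nat -> 'M[R[i]]_q) (hs : Hext kappa s) (n : nat) (hn : le_kappa (2 * n) kappa) :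
  let D := diagL n s in
  let H := Hn n s in
  [/\ (forall x, inRange D x -> inRange D (ctr (@Tq _ q n) *m x)),
      (forall x, inKer H x -> inRange D x -> x = 0),
      (forall x, exists u v, [/\ inKer H u, inRange D v & x = u + v]),
      \rank D = \rank H
    & \rank H = (\sum_(j < n.+1) \rank (Lj s j))%N].
Proof.
have [t st hP] := Hext_psd_succ hs hn.
have Lst j : (j <= n)%N -> Lj s j = Lj t j.
  by move=> jn; apply: Lj_ext => m mj; apply: st; lia.
have -> : diagL n s = diagL n t.
  by apply: eq_blockq => a b; case: eqP => // _; rewrite Lst // -ltnS.
have -> : Hn n s = Hn n t.
  by apply: eq_blockq => a b; apply: st; have := ltn_ord a; have := ltn_ord b; lia.
rewrite (eq_bigr (fun j : 'I_n.+1 => \rank (Lj t j))) => [|j _]; last by rewrite Lst // -ltnS.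
have dub := diagL_dubovoj hP.
exact: dub.
Qed.
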